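(* Let $G$ be a finite graph, $D$ a divisor on $G$, and $f \in R(G,D)$. Then $f$ is an extremal of $R(G,D)$ if and only if there do not exist two proper subsets $V_1, V_2 \subsetneq V(G)$ with $V_1\cup V_2=V(G)$ such that each of $V_1$ and $V_2$ can fire on $D+\mathrm{div}(f)$.
   Context: A finite graph $G$ is connected, with finitely many vertices $V(G)$ and edges $E(G)$, loops and multiple edges allowed. A divisor on $G$ is a formal sum $D=\sum_{x\in V(G)}D(x)[x]$, $D(x)\in{\mathbb{Z}}$; effective if all $D(x)\ge0$. A rational function is $f:V(G)\to{\mathbb{Z}}$; $\mathrm{ord}_x(f)=\sum_{e=\overline{xy}\in E(G)}(f(y)-f(x))$ and $\mathrm{div}(f)=\sum_x\mathrm{ord}_x(f)[x]$. $R(G,D)=\{f: D+\mathrm{div}(f)\ge0\}$. An extremal of $R(G,D)$ is $f\in R(G,D)$ such that $f=\max(g,h)$ with $g,h\in R(G,D)$ implies $f=g$ or $f=h$. For $V'\subseteq V(G)$, $\mathrm{CF}(V')$ is the function equal to $0$ on $V'$ and $-1$ off $V'$; $V'$ can fire on a divisor $E$ if $E+\mathrm{div}(\mathrm{CF}(V'))$ is effective. *)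

From mathcomp Require Import all_boot all_order all_algebra.
Set Implicit Arguments. Unset Strict Implicit. Unset Printing Implicit Defensive.
Import Order.TTheory GRing.Theory Num.Theory.
Local Open Scope ring_scope.

(* A finite (multi)graph: finite vertex type V, finite edge type E, each edge
   e having endpoints src e and tgt e (the orientation is irrelevant; loops
   src e = tgt e and parallel edges are allowed). *)
Section Graph.
Variables (V E : finType) (src tgt : E -> V).

Definition adjacent : rel V :=
  fun x y => [exists e, ((src e == x) && (tgt e == y)) || ((src e == y) && (tgt e == x))].

Definition connected_graph : Prop := forall x y : V, connect adjacent x y.

Definition divisor := {ffun V -> int}.
Definition ratfun := {ffun V -> int}.

(* ord_x(f) = sum over edges e = xy incident to x of (f y - f x).
   A loop at x contributes f x - f x = 0. *)
Definition ord (f : ratfun) (x : V) : int :=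
  \sum_(e : E | src e == x) (f (tgt e) - f x)
  + \sum_(e : E | (tgt e == x) && (src e != x)) (f (src e) - f x).

Definition divf (f : ratfun) : divisor := [ffun x => ord f x].

Definition effective (D : divisor) : bool := [forall x, 0 <= D x].

Definition addD (D1 D2 : divisor) : divisor := [ffun x => D1 x + D2 x].

Definition inR (D : divisor) (f : ratfun) : bool := effective (addD D (divf f)).

Definition maxf (g h : ratfun) : ratfun := [ffun x => Num.max (g x) (h x)].

Definition extremal (D : divisor) (f : ratfun) : Prop :=
  inR D f /\
  forall g h : ratfun, inR D g -> inR D h -> f = maxf g h -> f = g \/ f = h.

Definition CF (V' : {set V}) : ratfun := [ffun x => if x \in V' then 0 else -1].

Definition can_fire (V' : {set V}) (D : divisor) : bool := inR D (CF V').

End Graph.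

(* If [f = max g h] with [g, h] in [R(G,D)] and [f] different from both, the
   agreement sets [{g = f}] and [{h = f}] are proper, cover [V(G)], and can
   fire on [D + div f]: on [{g = f}] the function [f + CF {g = f}] dominates
   [g] and touches it, so its order there is at least that of [g]; off
   [{g = f}] the function [CF {g = f}] attains its minimum, so its order is
   nonnegative.  Conversely, if proper [V1, V2] covering [V(G)] can fire, then
   [f = max (f + CF V1) (f + CF V2)] is a nontrivial decomposition in
   [R(G,D)]. *)

From mathcomp Require Import all_boot all_order all_algebra.
From mathcomp Require Import zify.
Set Implicit Arguments.
Unset Strict Implicit.
Unset Printing Implicit Defensive.

Import Order.TTheory GRing.Theory Num.Theory.
Local Open Scope ring_scope.

Section Extremals.
Variables (V E : finType) (src tgt : E -> V).

Local Notation ord := (ord src tgt).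
Local Notation divf := (divf src tgt).
Local Notation inR := (inR src tgt).
Local Notation can_fire := (can_fire src tgt).

Lemma ord_addD (f g : ratfun V) x : ord (addD f g) x = ord f x + ord g x.
Proof.
rewrite /ord addrACA -!big_split /=.
by congr (_ + _); apply: eq_bigr => e _; rewrite !ffunE opprD addrACA.
Qed.

Lemma inR_addD (D : divisor V) (f g : ratfun V) :
  inR D (addD f g) = inR (addD D (divf f)) g.
Proof.
by congr effective; apply/ffunP => x; rewrite !ffunE ord_addD addrA.
Qed.

Lemma ler_ord (p q : ratfun V) x :
  (forall y, p y <= q y) -> p x = q x -> ord p x <= ord q x.
Proof.
move=> le_pq eq_pq; rewrite /ord eq_pq.
by apply: lerD; apply: ler_sum => e _; rewrite lerD2r.
Qed.

Lemma ord_CF_ge0 (W : {set V}) x : x \notin W -> 0 <= ord (CF W) x.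
Proof.
move=> xNW; rewrite /ord !ffunE (negbTE xNW).
by apply: addr_ge0; apply: sumr_ge0 => e _; rewrite ffunE; case: ifP.
Qed.

Lemma can_fire_agreement (D : divisor V) (f g : ratfun V) :
  inR D f -> inR D g -> (forall y, g y <= f y) ->
  can_fire [set x | g x == f x] (addD D (divf f)).
Proof.
set W := [set x | g x == f x] => /forallP Rf /forallP Rg le_gf.
have le_g_fCF y : g y <= addD f (CF W) y.
  rewrite !ffunE inE; case: eqP => [-> | /eqP ne_gf]; first by rewrite addr0.
  by have := le_gf y; rewrite le_eqVlt (negbTE ne_gf) /=; lia.
apply/forallP => x; rewrite !ffunE.
have := Rf x; rewrite !ffunE => Rfx.
have [xW | xNW] := boolP (x \in W); last by rewrite addr_ge0 ?ord_CF_ge0.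
have eq_gx : g x = addD f (CF W) x.
  by rewrite !ffunE xW addr0; apply/eqP; rewrite inE in xW.
have := ler_ord le_g_fCF eq_gx; rewrite ord_addD => le_ord.
have := Rg x; rewrite !ffunE => Rgx.
by rewrite -addrA; apply: le_trans Rgx _; rewrite lerD2l.
Qed.

Lemma addD_CF_neq (f : ratfun V) (W : {set V}) :
  W \proper [set: V] -> addD f (CF W) != f.
Proof.
case/properP=> _ [x _ xNW]; apply/eqP => /ffunP/(_ x).
rewrite !ffunE (negbTE xNW) -[X in _ = X]addr0 => /addrI/eqP.
by rewrite oppr_eq0 oner_eq0.
Qed.

Lemma maxf_addD_CF (f : ratfun V) (V1 V2 : {set V}) :
  V1 :|: V2 = [set: V] -> maxf (addD f (CF V1)) (addD f (CF V2)) = f.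
Proof.
move=> cover; apply/ffunP => x; rewrite !ffunE.
have := in_setT x; rewrite -cover inE.
by case: (x \in V1); case: (x \in V2) => //= _; rewrite maxEle; case: leP; lia.
Qed.

Lemma agreement_proper (f g : ratfun V) :
  g != f -> [set x | g x == f x] \proper [set: V].
Proof.
move=> ne_gf; rewrite properT; apply: contraNneq ne_gf => agree.
apply/eqP/ffunP => x; apply/eqP.
by have := in_setT x; rewrite -agree inE.
Qed.

Lemma agreement_maxf_cover (g h : ratfun V) :
  [set x | g x == maxf g h x] :|: [set x | h x == maxf g h x] = [set: V].
Proof.
by apply/setP => x; rewrite !inE !ffunE maxEle; case: leP; rewrite eqxx ?orbT.
Qed.

End Extremals.

Theorem lemma3p3 (V E : finType) (src tgt : E -> V)
  (Gconn : connected_graph src tgt)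
  (D : divisor V) (f : ratfun V) (hf : inR src tgt D f) :
  extremal src tgt D f <->
  ~ (exists V1 V2 : {set V},
        [/\ V1 \proper [set: V], V2 \proper [set: V], V1 :|: V2 = [set: V],
            can_fire src tgt V1 (addD D (divf src tgt f))
          & can_fire src tgt V2 (addD D (divf src tgt f))]).
Proof.
split.
- move=> [_ extf] [V1 [V2 [V1_proper V2_proper cover fire1 fire2]]].
  have := extf _ _ _ _ (esym (maxf_addD_CF f cover)).
  rewrite !inR_addD => /(_ fire1 fire2).
  by case=> /esym/eqP; apply/negP; apply: addD_CF_neq.
- move=> no_fire; split=> // g h Rg Rh f_max.
  have [<- | ne_gf] := eqVneq g f; first by left.
  have [<- | ne_hf] := eqVneq h f; first by right.
  case: no_fire; exists [set x | g x == f x], [set x | h x == f x].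
  have le_gf y : g y <= f y by rewrite f_max ffunE le_max lexx.
  have le_hf y : h y <= f y by rewrite f_max ffunE le_max lexx orbT.
  split; rewrite ?agreement_proper ?can_fire_agreement //.
  by rewrite f_max agreement_maxf_cover.
Qed.
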